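(* Let $T=(V,E)$ be a tree shape and $k$ a positive integer such that for every choice of root $u_0\in V$ there is a root-to-leaf path in $T$ containing at least $k$ turning points. Then any growth process for $T$ starting from a single node in the connectivity graph model requires at least $k-1$ time steps.
   Context: Shapes. Grid points are integer pairs $(x,y)$; two grid points are adjacent if they are at orthogonal (Manhattan) distance $1$. A shape $S=(V,E)$ is a finite connected graph whose nodes occupy distinct grid points and whose edges join only pairs of nodes occupying adjacent points; shapes are considered up to translation. Growth operations. One node, the anchor $u_0$, is stationary; other nodes move relative to it, and a tree is rooted at $u_0$. A growth operation on a node $u$ toward an adjacent grid point $p$ either (i) if $u$ has no edge to $p$, creates a new node $u'$ at $p$ with edge $uu'$; or (ii) if $p$ is occupied by a node $v$ with $uv\in E$, creates a new node $u'$ at $p$, replaces edge $uv$ by edges $uu',u'v$, and translates by one unit, along the axis of $uv$, the part of the tree hanging from whichever of $u,v$ is farther from $u_0$, away from the other endpoint. In one time step a set of operations is applied concurrently, each node receiving at most one operation and all operations having the same cardinal direction; the displacement of each node is the sum of the unit vectors contributed by the operations on its path to $u_0$. The set is collision-free if no two nodes collide during these motions or end at the same point. Growth processes (connectivity graph model). A growth process from an initial shape $S_0$ performs time steps $t=1,2,\dots$, each applying a collision-free set of growth operations to the current shape; no edges are deleted and no edges are created other than by the operations. It grows $S$ from $S_0$ in $t_f$ time steps if the shape obtained after step $t_f$ is $S$. A node $w$ of a path is a turning point of the path if it is an endpoint or its two path-neighbors $v_1,v_2$ satisfy $v_1w\perp wv_2$. *)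

From Stdlib Require Import ZArith List Bool.
Import ListNotations.
Open Scope Z_scope.

Definition pt : Type := (Z * Z)%type.
Definition padd (a b : pt) : pt := (fst a + fst b, snd a + snd b).
Definition psub (a b : pt) : pt := (fst a - fst b, snd a - snd b).
Definition pt_eqb (a b : pt) : bool := (fst a =? fst b) && (snd a =? snd b).
Definition inb (a : pt) (l : list pt) : bool := existsb (pt_eqb a) l.

Definition adjacent (a b : pt) : Prop :=
  Z.abs (fst a - fst b) + Z.abs (snd a - snd b) = 1.

Definition cardinal (d : pt) : Prop :=
  d = (1, 0) \/ d = (-1, 0) \/ d = (0, 1) \/ d = (0, -1).

(** * Shapes.  Nodes are identified with the distinct grid points they
    occupy; [edg] is the (boolean) edge relation. *)
Record shape := mkShape { pts : list pt ; edg : pt -> pt -> bool }.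

Definition shape_wf (S : shape) : Prop :=
  (forall x y, edg S x y = edg S y x) /\
  (forall x y, edg S x y = true -> In x (pts S) /\ In y (pts S) /\ adjacent x y).

Fixpoint chain (S : shape) (p : list pt) : Prop :=
  match p with
  | x :: ((y :: _) as t) => edg S x y = true /\ chain S t
  | _ => True
  end.

Definition is_path (S : shape) (p : list pt) : Prop :=
  p <> [] /\ NoDup p /\ (forall x, In x p -> In x (pts S)) /\ chain S p.

Definition path_from_to (S : shape) (p : list pt) (a b : pt) : Prop :=
  is_path S p /\ hd a p = a /\ last p a = b.

Definition connected (S : shape) : Prop :=
  forall a b, In a (pts S) -> In b (pts S) -> exists p, path_from_to S p a b.

Definition has_cycle (S : shape) : Prop :=
  exists c x, (3 <= length c)%nat /\ is_path S c /\ edg S (last c x) (hd x c) = true.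

Definition is_shape (S : shape) : Prop :=
  pts S <> [] /\ shape_wf S /\ connected S.

Definition tree_shape (S : shape) : Prop := is_shape S /\ ~ has_cycle S.

Definition shape_equiv (S T : shape) : Prop :=
  exists t : pt,
    (forall q, In q (pts S) <-> In (padd q t) (pts T)) /\
    (forall x y, edg S x y = edg T (padd x t) (padd y t)).

Definition perp (v1 w v2 : pt) : bool :=
  let a := psub w v1 in let b := psub v2 w in
  fst a * fst b + snd a * snd b =? 0.

Fixpoint interior_turns (p : list pt) : nat :=
  match p with
  | a :: ((b :: c :: _) as t) => ((if perp a b c then 1 else 0) + interior_turns t)%nat
  | _ => 0%nat
  end.

(** number of turning points of a path (endpoints always count) *)
Definition turning_count (p : list pt) : nat :=
  match p with
  | [] => 0%nat
  | [_] => 1%nat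
  | _ => (2 + interior_turns p)%nat
  end.

(** root-to-leaf path of the tree S rooted at u0: a path starting at u0 and
    ending at a node w with no children (all neighbours of w lie on the path) *)
Definition root_to_leaf_path (S : shape) (u0 : pt) (p : list pt) : Prop :=
  is_path S p /\ hd u0 p = u0 /\
  (forall z, edg S (last p u0) z = true -> In z p).

(** Data of a time step on shape S: a common cardinal direction d, the
    anchor a0, the list U of nodes receiving an operation (each node at most
    one operation; the operation on u is toward p = u + d), and the
    displacement D of every old node. *)

(** the edge {x,y} of S is subdivided by an operation of kind (ii) *)
Definition subdiv (S : shape) (d : pt) (U : list pt) (x y : pt) : bool :=
  edg S x y &&
  ((inb x U && pt_eqb y (padd x d)) || (inb y U && pt_eqb x (padd y d))).

(** contribution of the edge traversed from x (closer to u0) to y: if the edge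
    is subdivided, y's side is translated away from x by the unit vector y - x *)
Definition contrib (S : shape) (d : pt) (U : list pt) (x y : pt) : pt :=
  if subdiv S d U x y then psub y x else (0, 0).

Fixpoint path_disp (S : shape) (d : pt) (U : list pt) (p : list pt) : pt :=
  match p with
  | x :: ((y :: _) as t) => padd (contrib S d U x y) (path_disp S d U t)
  | _ => (0, 0)
  end.

(** the operation on u is of kind (ii) (u has an edge to p = u + d) *)
Definition kind2 (S : shape) (d u : pt) : bool := edg S u (padd u d).

(** linear motions a + t*da and b + t*db meet for some t in [0,1] *)
Definition collide (a da b db : pt) : Prop :=
  exists n m : Z, 0 <= n <= m /\ 0 < m /\
    m * (fst a - fst b) = n * (fst db - fst da) /\
    m * (snd a - snd b) = n * (snd db - snd da).

Definition step (S S' : shape) : Prop :=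
  exists (d a0 : pt) (U : list pt) (D : pt -> pt),
    cardinal d /\ In a0 (pts S) /\
    (forall u, In u U -> In u (pts S)) /\
    (forall w p, In w (pts S) -> path_from_to S p a0 w -> D w = path_disp S d U p) /\
    (* collision-freeness: old nodes move linearly from w to w + D w;
       a new node of kind (i) is created at u + d and moves rigidly with u *)
    (forall w1 w2, In w1 (pts S) -> In w2 (pts S) -> w1 <> w2 ->
        ~ collide w1 (D w1) w2 (D w2)) /\
    (forall w u, In w (pts S) -> In u U -> kind2 S d u = false ->
        ~ collide w (D w) (padd u d) (D u)) /\
    (forall u1 u2, In u1 U -> In u2 U -> u1 <> u2 ->
        kind2 S d u1 = false -> kind2 S d u2 = false ->
        ~ collide (padd u1 d) (D u1) (padd u2 d) (D u2)) /\
    (* no two nodes end at the same point; the new node u' created by the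
       operation on u ends at (u + D u) + d *)
    (forall w u, In w (pts S) -> In u U -> padd w (D w) <> padd (padd u (D u)) d) /\
    (forall u1 u2, In u1 U -> In u2 U -> u1 <> u2 ->
        padd (padd u1 (D u1)) d <> padd (padd u2 (D u2)) d) /\
    (forall q, In q (pts S') <->
        ((exists w, In w (pts S) /\ q = padd w (D w)) \/
         (exists u, In u U /\ q = padd (padd u (D u)) d))) /\
    (forall x y, edg S' x y = true <->
        ((exists a b, edg S a b = true /\ subdiv S d U a b = false /\
                      x = padd a (D a) /\ y = padd b (D b)) \/
         (exists u, In u U /\
            ((x = padd u (D u) /\ y = padd (padd u (D u)) d) \/
             (y = padd u (D u) /\ x = padd (padd u (D u)) d))) \/
         (exists u, In u U /\ kind2 S d u = true /\
            ((x = padd (padd u (D u)) d /\ y = padd (padd u d) (D (padd u d))) \/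
             (y = padd (padd u (D u)) d /\ x = padd (padd u d) (D (padd u d))))))).

Definition single_node (S : shape) : Prop :=
  exists p, pts S = [p] /\ forall x y, edg S x y = false.

Definition grows_from_single (T : shape) (tf : nat) : Prop :=
  exists Sq : nat -> shape,
    single_node (Sq 0%nat) /\
    (forall i, (i < tf)%nat -> step (Sq i) (Sq (S i))) /\
    shape_equiv (Sq tf) T.

(** We run the growth process backwards.  In a step [S -> S'],
   every node [w] of [S] ends at an image [w + D w], and the new nodes are
   created next to images.  A simple path of [S'] that starts and ends at
   images lifts to a path of [S] ([lift_path]): an edge between two images is
   an unsubdivided edge of [S] translated rigidly, and a detour through a
   created node is a subdivided edge of [S] split into two collinear halves.
   Such a refinement keeps every turning point ([refines_turning_count]).  A
   deep path of [S'] can only fail to end at an image by ending at a created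
   leaf, and dropping that leaf costs at most one turning point; extending the
   lift to a leaf costs none.  Hence turn depth drops by at most one per step
   ([step_back]), and the same lifting shows connectivity is inherited
   backwards.  A single node has turn depth at most 1, so [k - tf <= 1]. *)

From Stdlib Require Import ZArith List Lia Classical FinFun.
Import ListNotations.
Open Scope Z_scope.

Lemma pt_eq_iff (a b : pt) : a = b <-> fst a = fst b /\ snd a = snd b.
Proof.
  destruct a, b; simpl; split; [intros H; inversion H; auto | intros [-> ->]; auto].
Qed.

Ltac pt_split :=
  repeat match goal with
  | H : @eq pt _ _ |- _ => apply pt_eq_iff in H; destruct H
  | H : @eq (Z * Z)%type _ _ |- _ => apply pt_eq_iff in H; destruct H
  end.
Ltac pt_lia :=
  pt_split; try (apply pt_eq_iff; split); unfold padd, psub in *; cbn [fst snd] in *; lia.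

Definition pt_eq_dec (a b : pt) : {a = b} + {a <> b}.
Proof. decide equality; apply Z.eq_dec. Defined.

Lemma pt_eqb_refl a : pt_eqb a a = true.
Proof. unfold pt_eqb; rewrite !Z.eqb_refl; reflexivity. Qed.

Lemma inb_In a l : In a l -> inb a l = true.
Proof.
  intros H; unfold inb; apply existsb_exists; exists a; split; auto; apply pt_eqb_refl.
Qed.

Lemma cardinal_nonzero d : cardinal d -> d <> (0, 0).
Proof. intros [-> | [-> | [-> | ->]]]; discriminate. Qed.

Lemma psub_padd x t : psub (padd x t) t = x.
Proof. pt_lia. Qed.
Lemma padd_psub x t : padd (psub x t) t = x.
Proof. pt_lia. Qed.

Lemma last_default {A} (l : list A) d d' : l <> [] -> last l d = last l d'.
Proof.
  intros Hl; destruct l as [|a l]; [congruence|]; clear Hl.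
  revert a; induction l as [|b l IH]; intros a; [reflexivity|apply IH].
Qed.

Lemma last_cons {A} (a : A) l d d' : l <> [] -> last (a :: l) d = last l d'.
Proof.
  intros Hl; destruct l as [|b l]; [congruence|].
  change (last (a :: b :: l) d) with (last (b :: l) d). apply last_default; discriminate.
Qed.

Lemma in_last {A} (l : list A) d : l <> [] -> In (last l d) l.
Proof.
  intros Hl; rewrite (app_removelast_last d Hl) at 2. apply in_or_app; right; left; auto.
Qed.

Lemma NoDup_app_disjoint {A} (l1 l2 : list A) x : NoDup (l1 ++ l2) -> In x l2 -> ~ In x l1.
Proof.
  intros H Hx. apply in_split in Hx as [u [v ->]].
  rewrite app_assoc in H. apply NoDup_remove_2 in H.
  intro; apply H; apply in_or_app; left; apply in_or_app; auto.
Qed.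

Lemma last_app_cons {A} (l t : list A) a d : last (l ++ a :: t) d = last (a :: t) d.
Proof.
  induction l as [|b l IH]; [reflexivity|].
  rewrite <- app_comm_cons, (last_cons b _ d d) by (destruct l; discriminate); exact IH.
Qed.

Lemma hd_snoc {A} (l : list A) x d : l <> [] -> hd d (l ++ [x]) = hd d l.
Proof. destruct l; simpl; congruence. Qed.

Lemma NoDup_snoc {A} (l : list A) x : NoDup l -> ~ In x l -> NoDup (l ++ [x]).
Proof.
  intros. apply NoDup_app; auto. constructor; auto; constructor.
  intros a Ha [<-|[]]; auto.
Qed.

Lemma chain_app S l1 l2 : chain S (l1 ++ l2) -> chain S l1 /\ chain S l2.
Proof.
  induction l1 as [|a l1 IH]; simpl; auto.
  destruct l1 as [|b l1]; simpl in *.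
  - destruct l2; simpl; intuition.
  - intros [H1 H2]; apply IH in H2; intuition.
Qed.

Lemma chain_snoc S l x d : chain S l -> l <> [] -> edg S (last l d) x = true -> chain S (l ++ [x]).
Proof.
  induction l as [|a l IH]; simpl; [congruence|].
  destruct l as [|b l]; simpl; auto.
  intros [H1 H2] _ H3; split; auto. apply IH; auto; congruence.
Qed.

Lemma chain_last S l x d : chain S (l ++ [x]) -> l <> [] -> edg S (last l d) x = true.
Proof.
  induction l as [|a l IH]; simpl; [congruence|].
  destruct l as [|b l]; simpl; [tauto|].
  intros [H1 H2] _; apply IH; auto; congruence.
Qed.

Definition dotb (e f : pt) : bool := fst e * fst f + snd e * snd f =? 0.

Definition first_dir (l : list pt) : option pt :=
  match l with a :: b :: _ => Some (psub b a) | _ => None end.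

Definition turn_at (e : pt) (o : option pt) : nat :=
  match o with Some f => if dotb e f then 1%nat else 0%nat | None => 0%nat end.

Lemma interior_turns_cons a b t :
  interior_turns (a :: b :: t) =
  (turn_at (psub b a) (first_dir (b :: t)) + interior_turns (b :: t))%nat.
Proof. destruct t; reflexivity. Qed.

(** A nonzero vector is not orthogonal to itself: a path going straight on
    does not turn. *)
Lemma dotb_self_nonzero v : v <> (0, 0) -> dotb v v = false.
Proof.
  intros Hv. apply Z.eqb_neq. intros E. apply Hv. destruct v as [x y]; simpl in E.
  assert (x = 0) by nia. assert (y = 0) by nia. subst; reflexivity.
Qed.

(** This is how a path of a grown shape sits over a path of the old shape. *)
Inductive refines : list pt -> list pt -> Prop :=
| refines_one w x : refines [w] [x]
| refines_edge a b t x y t' :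
    refines (b :: t) (y :: t') -> psub y x = psub b a ->
    refines (a :: b :: t) (x :: y :: t')
| refines_split a b t x m y t' :
    refines (b :: t) (y :: t') -> psub m x = psub b a -> psub y m = psub b a ->
    psub b a <> (0, 0) -> refines (a :: b :: t) (x :: m :: y :: t').

Lemma refines_first_dir q p : refines q p -> first_dir p = first_dir q.
Proof. intros H; inversion H; subst; simpl; congruence. Qed.

Lemma refines_interior_turns q p : refines q p -> interior_turns p = interior_turns q.
Proof.
  induction 1 as [| a b t x y t' H IH E | a b t x m y t' H IH E1 E2 Hnz].
  - reflexivity.
  - rewrite !interior_turns_cons, E, IH, (refines_first_dir _ _ H); reflexivity.
  - rewrite (interior_turns_cons x m), (interior_turns_cons m y), (interior_turns_cons a b).
    change (first_dir (m :: y :: t')) with (Some (psub y m)).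
    rewrite E1, E2, (refines_first_dir _ _ H), IH.
    unfold turn_at at 1; rewrite dotb_self_nonzero by exact Hnz; reflexivity.
Qed.

Lemma refines_turning_count q p : refines q p -> turning_count p = turning_count q.
Proof.
  intros H. pose proof (refines_interior_turns _ _ H). inversion H; subst; simpl in *; auto.
Qed.

Lemma interior_turns_snoc l x :
  (interior_turns l <= interior_turns (l ++ [x]) <= interior_turns l + 1)%nat.
Proof.
  induction l as [|a l IH]; simpl; [lia|].
  destruct l as [|b l]; simpl; [lia|].
  destruct l as [|c l]; simpl in *; [destruct (perp a b x)|]; lia.
Qed.

Lemma turning_count_snoc l x : l <> [] ->
  (turning_count l <= turning_count (l ++ [x]) <= turning_count l + 1)%nat.
Proof.
  intros Hl. pose proof (interior_turns_snoc l x).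
  destruct l as [|a [|b l]]; [congruence| simpl; lia|]. simpl in *. lia.
Qed.

(** The two parts of [shape_wf] that growth steps preserve and that the
    analysis below uses: symmetric edges whose endpoints are nodes. *)
Definition edge_sym (S : shape) : Prop := forall x y, edg S x y = edg S y x.
Definition edge_in (S : shape) : Prop :=
  forall x y, edg S x y = true -> In x (pts S) /\ In y (pts S).

Lemma is_path_snoc S p z d : is_path S p -> edg S (last p d) z = true ->
  In z (pts S) -> ~ In z p -> is_path S (p ++ [z]).
Proof.
  intros [Hne [Hnd [Hin Hch]]] Hez Hz Hzn. split; [|split; [|split]].
  - destruct p; discriminate.
  - apply NoDup_snoc; auto.
  - intros x Hx; apply in_app_or in Hx as [Hx|[<-|[]]]; auto.
  - apply chain_snoc with d; auto.
Qed.

Lemma path_length_le S p : is_path S p -> (length p <= length (pts S))%nat.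
Proof. intros [_ [Hnd [Hin _]]]. apply NoDup_incl_length; auto. Qed.

Lemma path_snoc S p a0 a b : path_from_to S p a0 a -> edg S a b = true ->
  In b (pts S) -> ~ In b p -> path_from_to S (p ++ [b]) a0 b.
Proof.
  intros [Hp [Hh Hl]] Hab Hb Hbn. split; [|split].
  - apply is_path_snoc with a0; auto. rewrite Hl; exact Hab.
  - rewrite hd_snoc; auto. apply Hp.
  - apply last_last.
Qed.

Lemma path_prefix S p1 p2 a0 a b :
  path_from_to S (p1 ++ b :: p2) a0 a -> path_from_to S (p1 ++ [b]) a0 b.
Proof.
  intros [[_ [Hnd [Hin Hch]]] [Hh _]].
  replace (p1 ++ b :: p2) with ((p1 ++ [b]) ++ p2) in * by (rewrite <- app_assoc; reflexivity).
  split; [split; [|split; [|split]]|split].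
  - destruct p1; discriminate.
  - eapply NoDup_app_remove_r; eauto.
  - intros x Hx; apply Hin, in_or_app; auto.
  - apply chain_app in Hch; tauto.
  - destruct p1; exact Hh.
  - apply last_last.
Qed.

Definition turn_depth_ge (k : nat) (S : shape) : Prop := forall u0, In u0 (pts S) ->
  exists p, root_to_leaf_path S u0 p /\ (k <= turning_count p)%nat.

Lemma extend_to_leaf S u0 : edge_in S -> forall n p,
  (length (pts S) - length p <= n)%nat -> is_path S p -> hd u0 p = u0 ->
  exists q, root_to_leaf_path S u0 q /\ (turning_count p <= turning_count q)%nat.
Proof.
  intros Hin n; induction n as [|n IH]; intros p Hm Hp Hh;
    (destruct (classic (forall z, edg S (last p u0) z = true -> In z p)) as [Hleaf|Hnot];
     [exists p; split; [split; [|split]|]; auto|]);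
    apply not_all_ex_not in Hnot as [z Hz]; apply imply_to_and in Hz as [Hez Hzn];
    assert (Hp' : is_path S (p ++ [z])) by (apply is_path_snoc with u0; auto; apply (Hin _ _ Hez));
    pose proof (path_length_le _ _ Hp') as Hlen; rewrite length_app in Hlen; simpl in Hlen.
  - lia.
  - destruct (IH (p ++ [z])) as [q [Hq Hc]]; auto.
    + rewrite length_app; simpl; lia.
    + rewrite hd_snoc; auto. apply Hp.
    + exists q; split; auto. pose proof (turning_count_snoc p z ltac:(apply Hp)); lia.
Qed.

Lemma turning_count_translate t p :
  turning_count (map (fun x => psub x t) p) = turning_count p.
Proof.
  assert (Hit : interior_turns (map (fun x => psub x t) p) = interior_turns p).
  { induction p as [|a p IH]; [auto|]. destruct p as [|b p]; [auto|].
    destruct p as [|c p]; [auto|].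
    change (interior_turns (map (fun x => psub x t) (a :: b :: c :: p))) with
      ((if perp (psub a t) (psub b t) (psub c t) then 1 else 0) +
        interior_turns (map (fun x => psub x t) (b :: c :: p)))%nat.
    rewrite IH.
    replace (perp (psub a t) (psub b t) (psub c t)) with (perp a b c)
      by (unfold perp, psub; cbn [fst snd]; f_equal; ring).
    reflexivity. }
  destruct p as [|a [|b p]]; simpl in *; auto.
Qed.

Section Translation.
Variables (S T : shape) (t : pt).
Hypothesis Hpts : forall q, In q (pts S) <-> In (padd q t) (pts T).
Hypothesis Hedg : forall x y, edg S x y = edg T (padd x t) (padd y t).
Local Notation back p := (map (fun x => psub x t) p).

Lemma is_path_translate p : is_path T p -> is_path S (back p).
Proof.
  intros [Hne [Hnd [Hin Hch]]]. split; [|split; [|split]].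
  - destruct p; simpl; congruence.
  - apply FinFun.Injective_map_NoDup; auto. intros x y E.
    rewrite <- (padd_psub x t), <- (padd_psub y t), E; reflexivity.
  - intros x Hx. apply in_map_iff in Hx as [y [<- Hy]]. apply Hpts. rewrite padd_psub; auto.
  - clear Hne Hnd Hin. induction p as [|a p IH]; [exact I|].
    destruct p as [|b p]; [exact I|]. destruct Hch as [H1 H2]; split.
    + change (edg S (psub a t) (psub b t) = true). rewrite Hedg, !padd_psub; auto.
    + exact (IH H2).
Qed.

Lemma hd_translate p u : hd (padd u t) p = padd u t -> hd u (back p) = u.
Proof. destruct p; simpl; intros H; [reflexivity|rewrite H; apply psub_padd]. Qed.

Lemma last_translate p u : last (back p) u = psub (last p (padd u t)) t.
Proof.
  rewrite <- (psub_padd u t) at 1.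
  induction p as [|a p IH]; [reflexivity|]. destruct p; [reflexivity|exact IH].
Qed.

Lemma connected_translate : connected T -> connected S.
Proof.
  intros Hc a b Ha Hb. apply Hpts in Ha, Hb.
  destruct (Hc _ _ Ha Hb) as [p [Hp [Hh Hl]]].
  exists (back p). split; [apply is_path_translate; auto|split].
  - apply hd_translate; auto.
  - rewrite last_translate, Hl; apply psub_padd.
Qed.

Lemma turn_depth_translate k : turn_depth_ge k T -> turn_depth_ge k S.
Proof.
  intros HP u0 Hu0. apply Hpts in Hu0.
  destruct (HP _ Hu0) as [p [[Hp [Hh Hleaf]] Hk]].
  exists (back p). split; [split; [|split]|].
  - apply is_path_translate; auto.
  - apply hd_translate; auto.
  - intros z Hz. rewrite last_translate, Hedg, padd_psub in Hz.
    apply Hleaf in Hz. apply in_map_iff; exists (padd z t); split; [apply psub_padd|auto].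
  - rewrite turning_count_translate; auto.
Qed.

End Translation.

Lemma subdiv_sym S d U a b : edge_sym S -> subdiv S d U a b = subdiv S d U b a.
Proof.
  intros Hs; unfold subdiv; rewrite Hs.
  destruct (edg S b a); simpl; auto. apply Bool.orb_comm.
Qed.

Lemma subdiv_true S d U u : In u U -> edg S u (padd u d) = true ->
  subdiv S d U u (padd u d) = true.
Proof. intros H1 H2; unfold subdiv; rewrite H2, (inb_In _ _ H1), pt_eqb_refl; reflexivity. Qed.

Lemma path_disp_snoc S d U p b : p <> [] ->
  path_disp S d U (p ++ [b]) = padd (path_disp S d U p) (contrib S d U (last p b) b).
Proof.
  induction p as [|a p IH]; [congruence|]. intros _.
  destruct p as [|a' p]; [simpl; pt_lia|].
  change ((a :: a' :: p) ++ [b]) with (a :: ((a' :: p) ++ [b])).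
  transitivity (padd (contrib S d U a a') (path_disp S d U ((a' :: p) ++ [b]))); [reflexivity|].
  rewrite IH by congruence.
  change (last (a :: a' :: p) b) with (last (a' :: p) b).
  change (path_disp S d U (a :: a' :: p))
    with (padd (contrib S d U a a') (path_disp S d U (a' :: p))).
  pt_lia.
Qed.

(** [edge_law]: displacements change along each edge exactly by the
    contribution of that edge.  This local form of the displacement rule is
    what the lifting of paths uses. *)
Definition edge_law (S : shape) (d : pt) (U : list pt) (D : pt -> pt) : Prop :=
  forall a b, edg S a b = true -> D b = padd (D a) (contrib S d U a b).

(** In a connected shape, displacements defined by summing contributions along
    paths from the anchor obey the edge law: extend a path to [a] by [b], or,
    if [b] already lies on it, cut it at [b] and extend by [a]. *)
Lemma edge_law_of_paths S d U D a0 :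
  edge_sym S -> edge_in S -> connected S -> In a0 (pts S) ->
  (forall w p, In w (pts S) -> path_from_to S p a0 w -> D w = path_disp S d U p) ->
  edge_law S d U D.
Proof.
  intros Hs He Hc Ha0 HD a b Hab.
  destruct (He _ _ Hab) as [Ha Hb].
  destruct (pt_eq_dec a b) as [<-|Hne].
  { unfold contrib; destruct subdiv; pt_lia. }
  destruct (Hc _ _ Ha0 Ha) as [pa Hpa].
  assert (Hpa_ne : pa <> []) by apply Hpa.
  destruct (in_dec pt_eq_dec b pa) as [Hbin|Hbn].
  - apply in_split in Hbin as [p1 [p2 ->]].
    pose proof (path_prefix _ _ _ _ _ _ Hpa) as Hpb.
    assert (Han : ~ In a (p1 ++ [b])).
    { destruct Hpa as [[_ [Hnd _]] [_ Hl]].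
      rewrite last_app_cons in Hl.
      destruct p2 as [|c p2]; [simpl in Hl; congruence|].
      rewrite (last_cons b _ a0 a0) in Hl by discriminate.
      apply (NoDup_app_disjoint _ (c :: p2)); [rewrite <- app_assoc; exact Hnd|].
      rewrite <- Hl. apply in_last; discriminate. }
    assert (Hba : edg S b a = true) by (rewrite Hs; exact Hab).
    pose proof (path_snoc _ _ _ _ _ Hpb Hba Ha Han) as Hpa'.
    pose proof (HD a _ Ha Hpa') as HDa.
    rewrite path_disp_snoc, last_last, <- (HD b _ Hb Hpb) in HDa
      by (destruct p1; discriminate).
    unfold contrib in *. rewrite (subdiv_sym S d U a b Hs). destruct subdiv; pt_lia.
  - pose proof (path_snoc _ _ _ _ _ Hpa Hab Hb Hbn) as Hpb.
    rewrite (HD b _ Hb Hpb), path_disp_snoc, (HD a pa Ha Hpa) by auto.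
    destruct Hpa as [_ [_ Hl]]. rewrite (last_default pa b a0), Hl by auto. reflexivity.
Qed.

Definition stepP (S S' : shape) (d a0 : pt) (U : list pt) (D : pt -> pt) : Prop :=
    cardinal d /\ In a0 (pts S) /\
    (forall u, In u U -> In u (pts S)) /\
    (forall w p, In w (pts S) -> path_from_to S p a0 w -> D w = path_disp S d U p) /\
    (forall w1 w2, In w1 (pts S) -> In w2 (pts S) -> w1 <> w2 ->
        ~ collide w1 (D w1) w2 (D w2)) /\
    (forall w u, In w (pts S) -> In u U -> kind2 S d u = false ->
        ~ collide w (D w) (padd u d) (D u)) /\
    (forall u1 u2, In u1 U -> In u2 U -> u1 <> u2 ->
        kind2 S d u1 = false -> kind2 S d u2 = false ->
        ~ collide (padd u1 d) (D u1) (padd u2 d) (D u2)) /\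
    (forall w u, In w (pts S) -> In u U -> padd w (D w) <> padd (padd u (D u)) d) /\
    (forall u1 u2, In u1 U -> In u2 U -> u1 <> u2 ->
        padd (padd u1 (D u1)) d <> padd (padd u2 (D u2)) d) /\
    (forall q, In q (pts S') <->
        ((exists w, In w (pts S) /\ q = padd w (D w)) \/
         (exists u, In u U /\ q = padd (padd u (D u)) d))) /\
    (forall x y, edg S' x y = true <->
        ((exists a b, edg S a b = true /\ subdiv S d U a b = false /\
                      x = padd a (D a) /\ y = padd b (D b)) \/
         (exists u, In u U /\
            ((x = padd u (D u) /\ y = padd (padd u (D u)) d) \/
             (y = padd u (D u) /\ x = padd (padd u (D u)) d))) \/
         (exists u, In u U /\ kind2 S d u = true /\
            ((x = padd (padd u (D u)) d /\ y = padd (padd u d) (D (padd u d))) \/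
             (y = padd (padd u (D u)) d /\ x = padd (padd u d) (D (padd u d))))))).

Lemma step_unfold S S' : step S S' -> exists d a0 U D, stepP S S' d a0 U D.
Proof. intros H; exact H. Qed.

Section OneStep.
Variables (S S' : shape) (d a0 : pt) (U : list pt) (D : pt -> pt).
Hypothesis Hst : stepP S S' d a0 U D.
Hypothesis HsymS : edge_sym S.
Hypothesis HinS : edge_in S.

Local Notation img w := (padd w (D w)).
Local Notation created u := (padd (padd u (D u)) d).

Lemma step_cardinal : cardinal d.
Proof. apply Hst. Qed.

Lemma step_U_in u : In u U -> In u (pts S).
Proof. apply Hst. Qed.

Lemma step_pts q : In q (pts S') <->
  (exists w, In w (pts S) /\ q = img w) \/ (exists u, In u U /\ q = created u).
Proof. destruct Hst as (_&_&_&_&_&_&_&_&_&H&_). apply H. Qed.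

Lemma step_edg x y : edg S' x y = true <->
  ((exists a b, edg S a b = true /\ subdiv S d U a b = false /\ x = img a /\ y = img b) \/
   (exists u, In u U /\ ((x = img u /\ y = created u) \/ (y = img u /\ x = created u))) \/
   (exists u, In u U /\ kind2 S d u = true /\
      ((x = created u /\ y = img (padd u d)) \/ (y = created u /\ x = img (padd u d))))).
Proof. destruct Hst as (_&_&_&_&_&_&_&_&_&_&H). apply H. Qed.

Lemma img_in w : In w (pts S) -> In (img w) (pts S').
Proof. intros Hw; apply step_pts; left; eauto. Qed.

Lemma created_in u : In u U -> In (created u) (pts S').
Proof. intros Hu; apply step_pts; right; eauto. Qed.

(** Distinct old nodes do not collide, so in particular end apart. *)
Lemma img_inj w1 w2 : In w1 (pts S) -> In w2 (pts S) -> img w1 = img w2 -> w1 = w2.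
Proof.
  intros H1 H2 He. destruct (pt_eq_dec w1 w2) as [|Hn]; auto.
  exfalso; apply (proj1 (proj2 (proj2 (proj2 (proj2 Hst)))) _ _ H1 H2 Hn).
  exists 1, 1. pt_split. unfold padd in *; cbn [fst snd] in *. repeat split; lia.
Qed.

Lemma img_ne_created w u : In w (pts S) -> In u U -> img w <> created u.
Proof. destruct Hst as (_&_&_&_&_&_&_&H&_). apply H. Qed.

Lemma created_inj u1 u2 : In u1 U -> In u2 U -> created u1 = created u2 -> u1 = u2.
Proof.
  destruct Hst as (_&_&_&_&_&_&_&_&H&_). intros H1 H2 He.
  destruct (pt_eq_dec u1 u2) as [|Hn]; auto. exfalso; exact (H _ _ H1 H2 Hn He).
Qed.

Lemma image_edge a b : In a (pts S) -> In b (pts S) ->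
  edg S' (img a) (img b) = true -> edg S a b = true /\ subdiv S d U a b = false.
Proof.
  intros Ha Hb E.
  apply step_edg in E as [[a2 [b2 [E1 [E2 [E3 E4]]]]]|[[u [Hu [[E3 E4]|[E3 E4]]]]
    |[u [Hu [Hk [[E3 E4]|[E3 E4]]]]]]];
    try (exfalso; first [ apply (img_ne_created a u); auto; congruence
                        | apply (img_ne_created b u); auto; congruence ]).
  destruct (HinS _ _ E1).
  assert (a = a2) by (apply img_inj; auto). assert (b = b2) by (apply img_inj; auto).
  subst; auto.
Qed.

Lemma created_neighbours u y : In u U -> edg S' (created u) y = true ->
  y = img u \/ (kind2 S d u = true /\ y = img (padd u d)).
Proof.
  intros Hu E.
  apply step_edg in E as [[a2 [b2 [E1 [E2 [E3 E4]]]]]|[[u2 [Hu2 [[E3 E4]|[E3 E4]]]]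
    |[u2 [Hu2 [Hk [[E3 E4]|[E3 E4]]]]]]].
  - destruct (HinS _ _ E1) as [Ha2 _].
    exfalso; exact (img_ne_created a2 u Ha2 Hu (eq_sym E3)).
  - exfalso; exact (img_ne_created u2 u (step_U_in _ Hu2) Hu (eq_sym E3)).
  - left. assert (u = u2) by (apply created_inj; auto). subst; auto.
  - right. assert (u = u2) by (apply created_inj; auto). subst; auto.
  - unfold kind2 in Hk. destruct (HinS _ _ Hk) as [_ Hv].
    exfalso; exact (img_ne_created _ u Hv Hu (eq_sym E4)).
Qed.

Lemma step_edge_wf : edge_sym S' /\ edge_in S'.
Proof.
  split.
  - assert (Hi : forall x y, edg S' x y = true -> edg S' y x = true).
    { intros x y E. apply step_edg in E. apply step_edg.
      destruct E as [[a [b [E1 [E2 [E3 E4]]]]]|[[u [Hu E]]|[u [Hu [Hk E]]]]].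
      - left. exists b, a. rewrite HsymS, subdiv_sym; auto.
      - right; left. exists u; split; auto; tauto.
      - right; right. exists u; split; auto; split; auto; tauto. }
    intros x y. destruct (edg S' x y) eqn:E1; destruct (edg S' y x) eqn:E2; auto.
    + apply Hi in E1; congruence.
    + apply Hi in E2; congruence.
  - intros x y E. apply step_edg in E.
    destruct E as [[a [b [E1 [E2 [-> ->]]]]]|[[u [Hu E]]|[u [Hu [Hk E]]]]].
    + destruct (HinS _ _ E1). split; apply img_in; auto.
    + pose proof (img_in u (step_U_in u Hu)); pose proof (created_in u Hu).
      destruct E as [[-> ->]|[-> ->]]; auto.
    + unfold kind2 in Hk. destruct (HinS _ _ Hk) as [_ Hv].
      pose proof (img_in _ Hv); pose proof (created_in u Hu).
      destruct E as [[-> ->]|[-> ->]]; auto.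
Qed.

Lemma step_edge_law : connected S -> edge_law S d U D.
Proof.
  destruct Hst as (_&Ha0&_&HD&_). intros Hc.
  exact (edge_law_of_paths S d U D a0 HsymS HinS Hc Ha0 HD).
Qed.

(** A path of [S'] going from an image through a created node to another node
    crosses a subdivided edge [w, w'] of [S] straight on: under the edge law
    both halves have the direction [w' - w]. *)
Lemma lift_detour w u z : In w (pts S) -> In u U ->
  edg S' (img w) (created u) = true -> edg S' (created u) z = true -> z <> img w ->
  exists w', In w' (pts S) /\ z = img w' /\ edg S w w' = true /\
    (edge_law S d U D ->
       psub (created u) (img w) = psub w' w /\ psub z (created u) = psub w' w /\
       psub w' w <> (0, 0)).
Proof.
  intros Hw Hu Hwy Hyz Hzw.
  rewrite (proj1 step_edge_wf) in Hwy.
  pose proof (cardinal_nonzero d step_cardinal) as Hd0.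
  destruct (created_neighbours _ _ Hu Hwy) as [Ew|[Hk Ew]];
    destruct (created_neighbours _ _ Hu Hyz) as [Ez|[Hk' Ez]]; try congruence.
  -
    unfold kind2 in Hk'. destruct (HinS _ _ Hk') as [_ Hv].
    assert (w = u) by (apply img_inj; auto using step_U_in). subst w.
    exists (padd u d); split; [exact Hv|split; [exact Ez|split; [exact Hk'|]]].
    intros Hlaw. pose proof (Hlaw _ _ Hk') as HDv. unfold contrib in HDv.
    rewrite (subdiv_true _ _ _ _ Hu Hk') in HDv.
    split; [pt_lia|split; [pt_lia|intros E; apply Hd0; pt_lia]].
  -
    unfold kind2 in Hk. destruct (HinS _ _ Hk) as [_ Hv].
    assert (w = padd u d) by (apply img_inj; auto). subst w.
    assert (Hk2 : edg S (padd u d) u = true) by (rewrite HsymS; exact Hk).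
    exists u; split; [apply step_U_in; exact Hu|split; [exact Ez|split; [exact Hk2|]]].
    intros Hlaw. pose proof (Hlaw _ _ Hk2) as HDu. unfold contrib in HDu.
    rewrite (subdiv_sym _ _ _ _ _ HsymS), (subdiv_true _ _ _ _ Hu Hk) in HDu.
    split; [pt_lia|split; [pt_lia|intros E; apply Hd0; pt_lia]].
Qed.

Lemma lift_next w y rest : In w (pts S) ->
  chain S' (img w :: y :: rest) -> NoDup (img w :: y :: rest) ->
  (forall x, In x (y :: rest) -> In x (pts S')) ->
  (exists wl, In wl (pts S) /\ last (y :: rest) y = img wl) ->
  exists w' seg tail, y :: rest = seg ++ img w' :: tail /\ (length seg <= 1)%nat /\
    In w' (pts S) /\ edg S w w' = true /\
    (edge_law S d U D -> forall q, refines (w' :: q) (img w' :: tail) ->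
       refines (w :: w' :: q) (img w :: y :: rest)).
Proof.
  intros Hw [Hwy Hch] Hnd Hin [wl [Hwl Hl]].
  destruct (proj1 (step_pts y) (Hin y (or_introl eq_refl))) as [[w' [Hw' ->]]|[u [Hu ->]]].
  - destruct (image_edge _ _ Hw Hw' Hwy) as [Hww' Hsub].
    exists w', [], rest; split; [reflexivity|split; [simpl; lia|split; [exact Hw'|split; [exact Hww'|]]]].
    intros Hlaw q Hq. apply refines_edge; auto.
    pose proof (Hlaw _ _ Hww') as HD'. unfold contrib in HD'; rewrite Hsub in HD'. pt_lia.
  - destruct rest as [|z rest].
    { exfalso. exact (img_ne_created wl u Hwl Hu (eq_sym Hl)). }
    destruct Hch as [Hyz _].
    assert (Hzw : z <> img w).
    { intros ->. inversion Hnd as [|? ? Hn _]. apply Hn; right; left; reflexivity. }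
    destruct (lift_detour w u z Hw Hu Hwy Hyz Hzw) as [w' [Hw' [-> [Hww' Hgeo]]]].
    exists w', [created u], rest.
    split; [reflexivity|split; [simpl; lia|split; [exact Hw'|split; [exact Hww'|]]]].
    intros Hlaw q Hq. destruct (Hgeo Hlaw) as [E1 [E2 Hnz]]. apply refines_split; auto.
Qed.

Lemma lift_path : forall n rest w, (length rest <= n)%nat -> In w (pts S) ->
  chain S' (img w :: rest) -> NoDup (img w :: rest) ->
  (forall x, In x rest -> In x (pts S')) ->
  (exists wl, In wl (pts S) /\ last (img w :: rest) (img w) = img wl) ->
  exists q, chain S (w :: q) /\ NoDup (w :: q) /\
    (forall z, In z q -> In z (pts S) /\ In (img z) rest) /\
    img (last (w :: q) w) = last (img w :: rest) (img w) /\
    (edge_law S d U D -> refines (w :: q) (img w :: rest)).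
Proof.
  induction n as [|n IH]; intros rest w Hlen Hw Hch Hnd Hin [wl [Hwl Hl]];
    (destruct rest as [|y rest];
     [exists []; split; [exact I|split; [repeat constructor; intros []|split;
        [intros ? []|split; [reflexivity|constructor]]]]|]);
    [simpl in Hlen; lia|].
  rewrite (last_cons _ _ _ y) in Hl by discriminate.
  destruct (lift_next w y rest Hw Hch Hnd Hin (ex_intro _ wl (conj Hwl Hl)))
    as [w' [seg [tail [Hsplit [Hseg [Hw' [Hww' Href]]]]]]].
  assert (Htail : forall x, In x (img w' :: tail) -> In x (y :: rest))
    by (intros x Hx; rewrite Hsplit; apply in_or_app; right; exact Hx).
  assert (Hwn : ~ In (img w) (y :: rest)) by (inversion Hnd; assumption).
  rewrite Hsplit in Hch, Hnd, Hl, Hlen.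
  destruct (chain_app S' (img w :: seg) _ Hch) as [_ Hch'].
  pose proof (NoDup_app_remove_l (img w :: seg) _ Hnd) as Hnd'.
  rewrite last_app_cons in Hl.
  rewrite length_app in Hlen; simpl in Hlen.
  rewrite (last_default _ y (img w')) in Hl by discriminate.
  destruct (IH tail w' ltac:(lia) Hw' Hch' Hnd'
              (fun x Hx => Hin x (Htail x (or_intror Hx))) (ex_intro _ wl (conj Hwl Hl)))
    as [q [Hcq [Hndq [Hzq [Hlq Hrq]]]]].
  exists (w' :: q). split; [|split; [|split; [|split]]].
  - split; auto.
  - constructor; auto. intros [E|E].
    + apply Hwn, Htail; left; rewrite E; reflexivity.
    + apply Hwn, Htail; right; apply Hzq, E.
  - intros z [<-|Hz]; [split; [exact Hw'|apply Htail; left; reflexivity]|].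
    destruct (Hzq z Hz); split; auto. apply Htail; right; auto.
  - rewrite (last_cons w _ w w'), Hlq, (last_cons _ (y :: rest) _ (img w')), Hsplit,
      last_app_cons by discriminate.
    reflexivity.
  - intros Hlaw. apply Href; auto.
Qed.

Lemma connected_back : connected S' -> connected S.
Proof.
  intros Hc' a b Ha Hb.
  destruct (Hc' _ _ (img_in a Ha) (img_in b Hb)) as [p' [[Hne [Hnd [Hin Hch]]] [Hh Hl]]].
  destruct p' as [|x rest]; [congruence|]. simpl in Hh; subst x.
  destruct (lift_path (length rest) rest a) as [q [Hcq [Hndq [Hzq [Hlq _]]]]]; auto.
  { intros x Hx; apply Hin; right; auto. }
  { exists b; split; auto. }
  assert (Hinq : forall x, In x (a :: q) -> In x (pts S))
    by (intros x [<-|Hx]; [exact Ha|apply Hzq, Hx]).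
  exists (a :: q). split; [split; [discriminate|split; [exact Hndq|split; [exact Hinq|exact Hcq]]]|].
  split; [reflexivity|]. apply img_inj; [apply Hinq, in_last; discriminate|exact Hb|].
  rewrite Hlq; exact Hl.
Qed.

Lemma lift_rooted_path r rest : connected S -> In r (pts S) ->
  chain S' (img r :: rest) -> NoDup (img r :: rest) ->
  (forall x, In x rest -> In x (pts S')) ->
  (exists wl, In wl (pts S) /\ last (img r :: rest) (img r) = img wl) ->
  exists q, root_to_leaf_path S r q /\
    (turning_count (img r :: rest) <= turning_count q)%nat.
Proof.
  intros Hc Hr Hch Hnd Hin Hl.
  destruct (lift_path (length rest) rest r) as [q0 [Hcq [Hndq [Hzq [_ Href]]]]]; auto.
  destruct (extend_to_leaf S r HinS (length (pts S)) (r :: q0)) as [q [Hq Hcnt]]; auto.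
  - lia.
  - split; [discriminate|split; [exact Hndq|split; [|exact Hcq]]].
    intros x [<-|Hx]; auto. apply Hzq; auto.
  - exists q; split; auto.
    rewrite (refines_turning_count _ _ (Href (step_edge_law Hc))); auto.
Qed.

(** Lift a deep path of [S'] from the image of the root; when it ends
    at a created leaf, drop that leaf first, losing at most one turning point. *)
Lemma step_back k : connected S -> turn_depth_ge k S' -> turn_depth_ge (k - 1) S.
Proof.
  intros Hc HP r Hr.
  destruct (HP _ (img_in r Hr)) as [p' [[[Hne [Hnd [Hin Hch]]] [Hh _]] Hk]].
  destruct p' as [|x rest]; [congruence|]. simpl in Hh; subst x.
  assert (Hrest : forall x, In x rest -> In x (pts S')) by (intros x Hx; apply Hin; right; auto).
  destruct (proj1 (step_pts _) (Hin _ (in_last (img r :: rest) (img r) ltac:(discriminate))))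
    as [[wl [Hwl Hwle]]|[u [Hu Hue]]].
  - destruct (lift_rooted_path r rest) as [q [Hq Hcnt]]; eauto.
    exists q; split; auto. lia.
  - destruct rest as [|y rest0] using rev_ind.
    { exfalso. exact (img_ne_created r u Hr Hu Hue). }
    rewrite app_comm_cons, last_last in Hue. subst y.
    rewrite app_comm_cons in Hch, Hnd, Hk.
    pose proof (turning_count_snoc (img r :: rest0) (created u) ltac:(discriminate)) as Htc.
    pose proof (chain_last _ _ _ (img r) Hch ltac:(discriminate)) as Hel.
    rewrite (proj1 step_edge_wf) in Hel. apply (created_neighbours _ _ Hu) in Hel.
    destruct (lift_rooted_path r rest0) as [q [Hq Hcnt]]; auto.
    + apply chain_app in Hch; tauto.
    + eapply NoDup_app_remove_r; eauto.
    + intros x Hx; apply Hrest, in_or_app; left; auto.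
    + destruct Hel as [E|[Hkd E]].
      * exists u; split; [apply step_U_in; auto|auto].
      * exists (padd u d); split; [apply (HinS _ _ Hkd)|auto].
    + exists q; split; auto. lia.
Qed.

End OneStep.

Lemma process_edges_wf (Sq : nat -> shape) tf : single_node (Sq 0%nat) ->
  (forall i, (i < tf)%nat -> step (Sq i) (Sq (S i))) ->
  forall i, (i <= tf)%nat -> edge_sym (Sq i) /\ edge_in (Sq i).
Proof.
  intros [p0 [_ Hnone]] Hsteps i; induction i as [|i IH]; intros Hi.
  - split; intros x y; rewrite ?Hnone; [reflexivity|discriminate].
  - destruct (IH ltac:(lia)) as [Hs He].
    destruct (step_unfold _ _ (Hsteps i ltac:(lia))) as [d [a0 [U [D Hst]]]].
    eapply step_edge_wf; eauto.
Qed.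

Lemma process_turn_depth (Sq : nat -> shape) tf k : single_node (Sq 0%nat) ->
  (forall i, (i < tf)%nat -> step (Sq i) (Sq (S i))) ->
  connected (Sq tf) -> turn_depth_ge k (Sq tf) -> turn_depth_ge (k - tf) (Sq 0%nat).
Proof.
  intros H0 Hsteps Hc Hk.
  pose proof (process_edges_wf Sq tf H0 Hsteps) as Hwf.
  assert (Hback : forall m, (m <= tf)%nat ->
    connected (Sq (tf - m)%nat) /\ turn_depth_ge (k - m) (Sq (tf - m)%nat)).
  { induction m as [|m IH]; intros Hm.
    - rewrite !Nat.sub_0_r; auto.
    - destruct (IH ltac:(lia)) as [Hcm Hkm].
      replace (tf - m)%nat with (S (tf - S m)) in Hcm, Hkm by lia.
      destruct (step_unfold _ _ (Hsteps (tf - S m)%nat ltac:(lia))) as [d [a0 [U [D Hst]]]].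
      destruct (Hwf (tf - S m)%nat ltac:(lia)) as [Hs He].
      assert (Hc0 : connected (Sq (tf - S m)%nat)) by (eapply connected_back; eauto).
      split; auto.
      replace (k - S m)%nat with (k - m - 1)%nat by lia.
      eapply step_back; eauto. }
  destruct (Hback tf ltac:(lia)) as [_ Hd]. rewrite Nat.sub_diag in Hd. exact Hd.
Qed.

(** A single node admits only the one-node path, so its turn depth is at most 1. *)
Lemma single_node_turn_depth (S0 : shape) j :
  single_node S0 -> turn_depth_ge j S0 -> (j <= 1)%nat.
Proof.
  intros [p0 [Hp0 _]] Hj.
  destruct (Hj p0 ltac:(rewrite Hp0; left; auto)) as [q [[Hq _] Hk]].
  pose proof (path_length_le _ _ Hq) as Hlen; rewrite Hp0 in Hlen.
  destruct q as [|a [|b q]]; simpl in *; [destruct Hq; congruence | lia | lia].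
Qed.

Theorem theorem3p4 (T : shape) (k : nat) :
  tree_shape T -> (0 < k)%nat ->
  (forall u0, In u0 (pts T) ->
     exists p, root_to_leaf_path T u0 p /\ (k <= turning_count p)%nat) ->
  forall tf : nat, grows_from_single T tf -> (k - 1 <= tf)%nat.
Proof.
  intros [[_ [_ HcT]] _] _ Hdeep tf [Sq [H0 [Hsteps [t [Hpts Hedg]]]]].
  pose proof (connected_translate _ _ _ Hpts Hedg HcT) as Hc.
  pose proof (turn_depth_translate _ _ _ Hpts Hedg k Hdeep) as Hk.
  pose proof (single_node_turn_depth _ _ H0 (process_turn_depth Sq tf k H0 Hsteps Hc Hk)).
  lia.
Qed.
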